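(* Let $\Omega\subset\mathbb{R}$ be an open nonempty set such that $$\Omega = \bigoplus_{k=1}^m\Omega := \{y_1+\dots+y_m : y_k\in\Omega,\ 1\leq k\leq m\}$$ for some integer $m\geq 2$. Then $\Omega\in\{(0,+\infty),\ (-\infty,0),\ \mathbb{R}\}$. *)

From Stdlib Require Import Reals.
Open Scope R_scope.

(* The m-fold Minkowski sum  Omega (+) ... (+) Omega  (m summands):
   the set of all y_1 + ... + y_m with each y_k in Omega.
   Indices are shifted to 0..m-1; sum_f_R0 y (m-1) = y 0 + ... + y (m-1). *)
Definition msum (m : nat) (Omega : R -> Prop) : R -> Prop :=
  fun x => exists y : nat -> R,
    (forall k, (k < m)%nat -> Omega (y k)) /\ x = sum_f_R0 y (m - 1).

From Stdlib Require Import Reals Lra Lia Classical.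
Open Scope R_scope.

(* Taking y_1 = y and y_2 = ... = y_m = a shows that Omega is closed under
   y |-> y + (m-1) a for every a in Omega, in particular under the dilations
   x |-> (1 + k (m-1)) x.  Hence Omega contains arbitrarily long intervals, and
   an interval longer than a translation step under which Omega is closed
   spreads to a half-line.  If Omega has elements of both signs, the two
   resulting half-lines cover R.  If Omega lies in (0, +oo), each of its
   elements is a sum of at least two positive elements of Omega, so Omega has
   arbitrarily small elements, hence arbitrarily small translation steps, and
   fills (0, +oo); the case of (-oo, 0) is symmetric, and openness excludes
   every other configuration. *)

Lemma sum_f_R0_head_const (y a : R) (n : nat) :
  sum_f_R0 (fun k => match k with O => y | S _ => a end) n = y + INR n * a.
Proof.
  induction n as [|n IH]; [simpl; ring|].
  cbn [sum_f_R0]; rewrite IH, S_INR; ring.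
Qed.

Lemma sum_f_R0_opp (Y : nat -> R) (n : nat) :
  sum_f_R0 (fun k => - Y k) n = - sum_f_R0 Y n.
Proof. induction n as [|n IH]; cbn [sum_f_R0]; [|rewrite IH]; ring. Qed.

Lemma sum_f_R0_ge_first_two (Y : nat -> R) (n : nat) :
  (1 <= n)%nat -> (forall k, (k <= n)%nat -> 0 <= Y k) ->
  Y 0%nat + Y 1%nat <= sum_f_R0 Y n.
Proof.
  induction n as [|n IH]; intros Hn HY; [lia|].
  destruct (Nat.eq_dec n 0) as [->|Hn0]; [simpl; lra|].
  cbn [sum_f_R0].
  assert (IHn : Y 0%nat + Y 1%nat <= sum_f_R0 Y n).
  { apply IH; [lia|]. intros k Hk; apply HY; lia. }
  pose proof (HY (S n) (le_n _)); lra.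
Qed.

Lemma msum_step (Omega : R -> Prop) (m : nat) (y a : R) :
  Omega y -> Omega a -> msum m Omega (y + INR (m - 1) * a).
Proof.
  intros Hy Ha.
  exists (fun k => match k with O => y | S _ => a end); split.
  - intros [|k] _; assumption.
  - rewrite sum_f_R0_head_const; reflexivity.
Qed.

Lemma msum_opp (Omega : R -> Prop) (m : nat) (x : R) :
  msum m (fun y => Omega (- y)) x <-> msum m Omega (- x).
Proof.
  split; intros [Y [HY HYx]]; exists (fun k => - Y k); split.
  - exact HY.
  - rewrite sum_f_R0_opp, HYx; reflexivity.
  - intros k Hk; rewrite Ropp_involutive; exact (HY k Hk).
  - rewrite sum_f_R0_opp, <- HYx; ring.
Qed.

Lemma msum_halve (Omega : R -> Prop) (m : nat) (x : R) :
  (2 <= m)%nat -> (forall y, Omega y -> 0 < y) -> msum m Omega x ->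
  exists y, Omega y /\ 2 * y <= x.
Proof.
  intros Hm Hpos [Y [HY ->]].
  assert (HY0 : Omega (Y 0%nat)) by (apply HY; lia).
  assert (HY1 : Omega (Y 1%nat)) by (apply HY; lia).
  assert (Hsum : Y 0%nat + Y 1%nat <= sum_f_R0 Y (m - 1)).
  { apply sum_f_R0_ge_first_two; [lia|].
    intros k Hk; apply Rlt_le, Hpos, HY; lia. }
  destruct (Rle_or_lt (Y 0%nat) (Y 1%nat)).
  - exists (Y 0%nat); split; [exact HY0|lra].
  - exists (Y 1%nat); split; [exact HY1|lra].
Qed.

Lemma open_set_ball (A : R -> Prop) (x : R) :
  open_set A -> A x -> exists r, 0 < r /\ forall y, x - r < y < x + r -> A y.
Proof.
  intros Hop Hx; destruct (Hop x Hx) as [[r Hr] Hdisc].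
  exists r; split; [exact Hr|].
  intros y Hy; apply Hdisc; unfold disc; simpl.
  apply Rabs_def1; lra.
Qed.

Lemma open_set_opp (A : R -> Prop) : open_set A -> open_set (fun x => A (- x)).
Proof.
  intros Hop x Hx; destruct (Hop _ Hx) as [r Hr]; exists r.
  intros y Hy; apply Hr; unfold disc in *.
  replace (- y - - x) with (- (y - x)) by ring.
  rewrite Rabs_Ropp; exact Hy.
Qed.

Lemma open_set_sign_cases (A : R -> Prop) :
  open_set A -> (exists x, A x) ->
  (forall x, A x -> 0 < x) \/ (forall x, A x -> x < 0) \/
  ((exists p, A p /\ 0 < p) /\ (exists n, A n /\ n < 0)).
Proof.
  intros Hop [x0 Hx0].
  assert (Hzero : A 0 -> (exists p, A p /\ 0 < p) /\ (exists n, A n /\ n < 0)).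
  { intros H0; destruct (open_set_ball A 0 Hop H0) as [r [Hr Hball]].
    split; [exists (r / 2)|exists (- (r / 2))]; split; try lra; apply Hball; lra. }
  destruct (classic (exists p, A p /\ 0 < p)) as [Hp|Hp];
    destruct (classic (exists n, A n /\ n < 0)) as [Hn|Hn].
  - right; right; split; assumption.
  - left; intros x Hx.
    destruct (Rtotal_order x 0) as [Hlt|[->|Hgt]]; [|tauto|exact Hgt].
    exfalso; apply Hn; exists x; split; assumption.
  - right; left; intros x Hx.
    destruct (Rtotal_order x 0) as [Hlt|[->|Hgt]]; [exact Hlt|tauto|].
    exfalso; apply Hp; exists x; split; assumption.
  - exfalso.
    destruct (Rtotal_order x0 0) as [Hlt|[->|Hgt]]; [apply Hn; eauto|tauto|apply Hp; eauto].
Qed.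

Lemma translate_closed_cover_right (A : R -> Prop) (a b t : R) :
  0 < t < b - a -> (forall x, a < x < b -> A x) ->
  (forall x, A x -> A (x + t)) -> forall z, a < z -> A z.
Proof.
  intros Ht Hab Htr.
  assert (Hn : forall (n : nat) z, a < z < b + INR n * t -> A z).
  { induction n as [|n IH]; intros z Hz.
    - apply Hab; simpl in Hz; lra.
    - rewrite S_INR in Hz.
      destruct (Rlt_or_le z (b + INR n * t)); [apply IH; lra|].
      replace z with (z - t + t) by ring.
      apply Htr, IH; pose proof (pos_INR n); nra. }
  intros z Hz; destruct (INR_unbounded ((z - b) / t)) as [n Hnz].
  apply (Hn n); split; [exact Hz|].
  assert ((z - b) / t * t = z - b) by (field; lra); nra.
Qed.

Lemma translate_closed_cover_left (A : R -> Prop) (a b t : R) :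
  0 < - t < b - a -> (forall x, a < x < b -> A x) ->
  (forall x, A x -> A (x + t)) -> forall z, z < b -> A z.
Proof.
  intros Ht Hab Htr z Hz; rewrite <- (Ropp_involutive z).
  apply (translate_closed_cover_right (fun x => A (- x)) (- b) (- a) (- t)).
  - lra.
  - intros x Hx; apply Hab; lra.
  - intros x Hx; replace (- (x + - t)) with (- x + t) by ring; apply Htr, Hx.
  - lra.
Qed.

Section StepClosed.

Variables (A : R -> Prop) (c : R).
Hypothesis c_pos : 0 < c.
Hypothesis A_step : forall y a, A y -> A a -> A (y + c * a).

Lemma step_iter (y a : R) (k : nat) : A y -> A a -> A (y + INR k * (c * a)).
Proof.
  intros Hy Ha; induction k as [|k IH].
  - replace (y + INR 0 * (c * a)) with y by (simpl; ring); exact Hy.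
  - replace (y + INR (S k) * (c * a)) with (y + INR k * (c * a) + c * a)
      by (rewrite S_INR; ring).
    apply A_step; assumption.
Qed.

Lemma step_closed_wide_interval (a b L : R) :
  a < b -> (forall x, a < x < b -> A x) ->
  exists a' b', L < b' - a' /\ forall x, a' < x < b' -> A x.
Proof.
  intros Hab Hint.
  destruct (INR_unbounded (L / (c * (b - a)))) as [k Hk].
  assert (Hkc : 0 <= INR k * c) by (apply Rmult_le_pos; [apply pos_INR|lra]).
  set (s := 1 + INR k * c).
  exists (s * a), (s * b); split.
  - assert (Hw : 0 < c * (b - a)) by nra.
    assert (L / (c * (b - a)) * (c * (b - a)) = L) by (field; lra).
    assert (L < INR k * (c * (b - a))) by nra.
    unfold s; lra.
  - intros x Hx.
    replace x with (x / s + INR k * (c * (x / s))) by (unfold s; field; lra).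
    assert (Hs : 0 < s) by (unfold s; lra).
    assert (Hxs : a < x / s < b).
    { split; apply (Rmult_lt_reg_l s); try exact Hs;
        replace (s * (x / s)) with x by (field; lra); lra. }
    apply step_iter; apply Hint, Hxs.
Qed.

Lemma step_closed_full (p n a b : R) :
  A p -> 0 < p -> A n -> n < 0 -> a < b -> (forall x, a < x < b -> A x) ->
  forall z, A z.
Proof.
  intros Hp Hp0 Hn Hn0 Hab Hint z.
  destruct (step_closed_wide_interval a b (c * p - c * n) Hab Hint)
    as [a' [b' [Hwide Hint']]].
  assert (0 < c * p) by nra; assert (c * n < 0) by nra.
  destruct (Rlt_or_le a' z).
  - apply (translate_closed_cover_right A a' b' (c * p)); auto; lra.
  - apply (translate_closed_cover_left A a' b' (c * n)); auto; lra.
Qed.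

End StepClosed.

Lemma halving_small (A : R -> Prop) (x0 : R) :
  (forall x, A x -> 0 < x) -> (forall x, A x -> exists y, A y /\ 2 * y <= x) ->
  A x0 -> forall eps, 0 < eps -> exists y, A y /\ y < eps.
Proof.
  intros Hpos Hhalve Hx0.
  assert (Hn : forall n : nat, exists y, A y /\ (INR n + 1) * y <= x0).
  { induction n as [|n [y [Hy Hyx]]]; [exists x0; simpl; split; [exact Hx0|lra]|].
    destruct (Hhalve y Hy) as [y' [Hy' Hy'y]].
    exists y'; split; [exact Hy'|].
    pose proof (Hpos y' Hy'); pose proof (pos_INR n); rewrite S_INR; nra. }
  intros eps Heps; destruct (INR_unbounded (x0 / eps)) as [n Hnx].
  destruct (Hn n) as [y [Hy Hyx]]; exists y; split; [exact Hy|].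
  assert (x0 / eps * eps = x0) by (field; lra).
  pose proof (Hpos y Hy); pose proof (pos_INR n); nra.
Qed.

Lemma msum_fixed_pos (Omega : R -> Prop) (m : nat) :
  open_set Omega -> (exists x, Omega x) -> (2 <= m)%nat ->
  (forall x, Omega x <-> msum m Omega x) -> (forall x, Omega x -> 0 < x) ->
  forall x, Omega x <-> 0 < x.
Proof.
  intros Hop [x0 Hx0] Hm Hsum Hpos z; split; [apply Hpos|intros Hz].
  assert (Hc : 0 < INR (m - 1)) by (apply lt_0_INR; lia).
  assert (Hsmall : forall eps, 0 < eps -> exists y, Omega y /\ y < eps).
  { apply (halving_small Omega x0 Hpos); [|exact Hx0].
    intros x Hx; apply (msum_halve Omega m x Hm Hpos), Hsum, Hx. }
  destruct (Hsmall z Hz) as [b [Hb Hbz]].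
  destruct (open_set_ball Omega b Hop Hb) as [r [Hr Hball]].
  destruct (Hsmall (r / INR (m - 1))) as [p [Hp Hpr]].
  { apply Rdiv_lt_0_compat; assumption. }
  assert (r / INR (m - 1) * INR (m - 1) = r) by (field; lra).
  pose proof (Hpos p Hp).
  apply (translate_closed_cover_right Omega (b - r) (b + r) (INR (m - 1) * p)).
  - split; nra.
  - exact Hball.
  - intros x Hx; apply Hsum, msum_step; assumption.
  - lra.
Qed.

Lemma msum_fixed_neg (Omega : R -> Prop) (m : nat) :
  open_set Omega -> (exists x, Omega x) -> (2 <= m)%nat ->
  (forall x, Omega x <-> msum m Omega x) -> (forall x, Omega x -> x < 0) ->
  forall x, Omega x <-> x < 0.
Proof.
  intros Hop [x0 Hx0] Hm Hsum Hneg x.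
  rewrite <- (Ropp_involutive x) at 1.
  rewrite (msum_fixed_pos (fun y => Omega (- y)) m); [lra|..].
  - apply open_set_opp, Hop.
  - exists (- x0); rewrite Ropp_involutive; exact Hx0.
  - exact Hm.
  - intros y; rewrite msum_opp; apply Hsum.
  - intros y Hy; apply Hneg in Hy; lra.
Qed.

Lemma msum_fixed_mixed (Omega : R -> Prop) (m : nat) (p n : R) :
  open_set Omega -> (2 <= m)%nat -> (forall x, msum m Omega x -> Omega x) ->
  Omega p -> 0 < p -> Omega n -> n < 0 -> forall x, Omega x.
Proof.
  intros Hop Hm Hsum Hp Hp0 Hn Hn0.
  destruct (open_set_ball Omega p Hop Hp) as [r [Hr Hball]].
  assert (Hc : 0 < INR (m - 1)) by (apply lt_0_INR; lia).
  assert (Hstep : forall y a, Omega y -> Omega a -> Omega (y + INR (m - 1) * a)).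
  { intros y a Hy Ha; apply Hsum, msum_step; assumption. }
  apply (step_closed_full Omega (INR (m - 1)) Hc Hstep p n (p - r) (p + r));
    try assumption; lra.
Qed.

Theorem lemma5p1 (Omega : R -> Prop) (m : nat) :
  open_set Omega ->
  (exists x, Omega x) ->
  (2 <= m)%nat ->
  (forall x, Omega x <-> msum m Omega x) ->
  (forall x, Omega x <-> 0 < x) \/
  (forall x, Omega x <-> x < 0) \/
  (forall x, Omega x).
Proof.
  intros Hop Hne Hm Hsum.
  destruct (open_set_sign_cases Omega Hop Hne)
    as [Hpos|[Hneg|[[p [Hp Hp0]] [n [Hn Hn0]]]]].
  - left; exact (msum_fixed_pos Omega m Hop Hne Hm Hsum Hpos).
  - right; left; exact (msum_fixed_neg Omega m Hop Hne Hm Hsum Hneg).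
  - right; right.
    apply (msum_fixed_mixed Omega m p n Hop Hm); try assumption.
    intros x; apply Hsum.
Qed.
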